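(* The following are equivalent: (i) there exists a decomposition of $V$ which is split with respect to the orderings $E_0,\ldots,E_d$ and $E^*_0,\ldots,E^*_d$; (ii) for all $0\le i,j\le d$: $E^*_iAE^*_j=0$ if $i-j>1$ and $E^*_iAE^*_j\ne0$ if $i-j=1$; and $E_iA^*E_j=0$ if $j-i>1$ and $E_iA^*E_j\ne0$ if $j-i=1$.
   Context: Let $\mathbb K$ be a field, $d\ge 0$ an integer, and $\mathcal A$ a $\mathbb K$-algebra isomorphic to $\mathrm{Mat}_{d+1}(\mathbb K)$, with identity $I$. An element of $\mathcal A$ is multiplicity-free if it has $d+1$ mutually distinct eigenvalues, all in $\mathbb K$; for such $A$ with eigenvalues $\theta_0,\ldots,\theta_d$, the primitive idempotent associated with $\theta_i$ is $E_i=\prod_{j\ne i}(A-\theta_jI)/(\theta_i-\theta_j)$. Standing setup: $A,A^*$ are multiplicity-free elements of $\mathcal A$ ($A^*$ is just a name, not an adjoint); $E_0,\ldots,E_d$ is an ordering of the primitive idempotents of $A$ and $\theta_i$ is the eigenvalue of $A$ for $E_i$; $E^*_0,\ldots,E^*_d$ is an ordering of the primitive idempotents of $A^*$ and $\theta^*_i$ is the eigenvalue of $A^*$ for $E^*_i$; $V$ is an irreducible left $\mathcal A$-module. A decomposition of $V$ is a sequence $U_0,\ldots,U_d$ of 1-dimensional subspaces with $V=U_0+\cdots+U_d$ (direct sum). Such a decomposition is split (with respect to the orderings $E_0,\ldots,E_d$ and $E^*_0,\ldots,E^*_d$) if $(A-\theta_iI)U_i=U_{i+1}$ for $0\le i\le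 d-1$, $(A-\theta_dI)U_d=0$, $(A^*-\theta^*_iI)U_i=U_{i-1}$ for $1\le i\le d$, and $(A^*-\theta^*_0I)U_0=0$. *)

From HB Require Import structures.
From mathcomp Require Import all_boot all_order all_algebra.
Set Implicit Arguments. Unset Strict Implicit. Unset Printing Implicit Defensive.
Import GRing.Theory.
Local Open Scope ring_scope.

(* The algebra is realized as 'M[K]_(d.+1); the irreducible left module V is
   K^(d+1) (column vectors).  We represent vectors of V as ROW vectors, so the
   left action  v |-> M v  becomes  v |-> v *m M^T, and subspaces of V are
   row spaces (mxalgebra, %MS). *)

Definition act (K : fieldType) (n : nat) (M U : 'M[K]_n) : 'M[K]_n := U *m M^T.

Definition mult_free_ordering (K : fieldType) (d : nat)
  (A : 'M[K]_(d.+1)) (th : 'I_(d.+1) -> K) : Prop :=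
  injective th /\ forall i, eigenvalue A (th i).

Definition prim_idem (K : fieldType) (d : nat)
  (A : 'M[K]_(d.+1)) (th : 'I_(d.+1) -> K) (i : 'I_(d.+1)) : 'M[K]_(d.+1) :=
  \prod_(j < d.+1 | j != i) ((th i - th j)^-1 *: (A - (th j)%:M)).

Definition is_decomposition (K : fieldType) (d : nat)
  (U : 'I_(d.+1) -> 'M[K]_(d.+1)) : Prop :=
  (forall i, \rank (U i) = 1%N) /\
  mxdirect (\sum_i U i) /\ (\sum_i U i == 1%:M)%MS.

Definition is_split (K : fieldType) (d : nat) (A As : 'M[K]_(d.+1))
  (th ths : 'I_(d.+1) -> K) (U : 'I_(d.+1) -> 'M[K]_(d.+1)) : Prop :=
  (forall i : 'I_(d.+1), (i < d)%N ->
     (act (A - (th i)%:M) (U i) == U (inord i.+1))%MS) /\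
  (act (A - (th ord_max)%:M) (U ord_max) == (0 : 'M[K]_(d.+1)))%MS /\
  (forall i : 'I_(d.+1), (0 < i)%N ->
     (act (As - (ths i)%:M) (U i) == U (inord i.-1))%MS) /\
  (act (As - (ths ord0)%:M) (U ord0) == (0 : 'M[K]_(d.+1)))%MS.

From HB Require Import structures.
From mathcomp Require Import all_boot all_order all_algebra zify.
Set Implicit Arguments. Unset Strict Implicit. Unset Printing Implicit Defensive.
Import GRing.Theory.
Local Open Scope ring_scope.

(* Put
   B := A^T, B* := A*^T, P_i := E_i^T and Q_i := E*_i^T: the P_i are
   orthogonal rank-one idempotents summing to 1 with B P_i = P_i B = th_i P_i,
   and likewise the Q_i for B*.  A split decomposition amounts to a basis
   u_0, ..., u_d such that u_i (B - th_i) is a nonzero multiple of u_(i+1)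
   and u_i (B* - th*_i) a nonzero multiple of u_(i-1).  The first relation
   makes u_l P_k vanish exactly when k < l, the second makes u_l Q_k vanish
   exactly when k > l; expanding the rows of Q_j in this doubly triangular
   basis shows that Q_j B Q_i is zero for i > j + 1 and nonzero for
   i = j + 1, and symmetrically for P_j B* P_i.  Conversely, under (ii) the
   vectors obtained from a nonzero row of Q_0 by applying B - th_0, ...,
   B - th_(l-1) are triangular against the Q_k, hence a basis, and the
   condition on the P_i pins u_i (B* - th*_i) down to a nonzero multiple of
   u_(i-1).  Reversing the order of the indices exchanges the roles of
   (B, P) and (B*, Q), so every triangularity argument is made only once. *)

Section Resolutions.
Variables (K : fieldType) (d : nat).
Local Notation n := d.+1.

Record resolution (R : 'I_n -> 'M[K]_n) : Prop := Resolution {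
  resolution_sum : \sum_i R i = 1%:M;
  resolution_orth : forall i j, R i *m R j = (i == j)%:R *: R i;
  resolution_neq0 : forall i, R i != 0 }.

Record eigen_resolution (M : 'M[K]_n) (lam : 'I_n -> K) (R : 'I_n -> 'M[K]_n)
  : Prop := EigenResolution {
  eigen_resolution_res : resolution R;
  eigen_resolution_inj : injective lam;
  eigen_resolution_left : forall i, M *m R i = lam i *: R i;
  eigen_resolution_right : forall i, R i *m M = lam i *: R i }.

Lemma ltn_rev_ord (i j : 'I_n) : (rev_ord i < rev_ord j)%N = (j < i)%N.
Proof. by apply/idP/idP; rewrite /=; have := ltn_ord i; have := ltn_ord j; lia. Qed.

Definition reversed T (f : 'I_n -> T) (i : 'I_n) : T := f (rev_ord i).

Lemma sum_reversed (f : 'I_n -> 'M[K]_n) : \sum_i reversed f i = \sum_i f i.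
Proof. by rewrite [RHS](reindex_inj rev_ord_inj). Qed.

Lemma resolution_rev R : resolution R -> resolution (reversed R).
Proof.
case=> Rsum Rorth R0; split=> [|i j|i]; rewrite /reversed ?sum_reversed //.
by rewrite Rorth (inj_eq rev_ord_inj).
Qed.

Lemma eigen_resolution_rev M lam R :
  eigen_resolution M lam R -> eigen_resolution M (reversed lam) (reversed R).
Proof.
case=> Rres lam_inj ML MR; split=> [||i|i]; rewrite /reversed ?ML ?MR //.
  exact: resolution_rev.
by move=> i j /lam_inj /rev_ord_inj.
Qed.

Lemma eigen_resolution_tr M lam R :
  eigen_resolution M lam R -> eigen_resolution M^T lam (fun i => (R i)^T).
Proof.
case=> [[Rsum Rorth R0] lam_inj ML MR]; split=> // [|i|i].
- split=> [|i j|i]; last by rewrite trmx_eq0.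
    by rewrite -linear_sum /= Rsum trmx1.
  rewrite -trmx_mul Rorth linearZ /= eq_sym.
  case: eqVneq => [->|_]; by rewrite ?scale0r.
- by rewrite -trmx_mul MR linearZ.
- by rewrite -trmx_mul ML linearZ.
Qed.

Lemma eigen_resolution_subC M lam R c i : eigen_resolution M lam R ->
  (M - c%:M) *m R i = (lam i - c) *: R i.
Proof.
by move=> Rres; rewrite mulmxBl (eigen_resolution_left Rres) mul_scalar_mx scalerBl.
Qed.

Section Resolution.
Variables (R : 'I_n -> 'M[K]_n).
Hypothesis Rres : resolution R.

Lemma resolution_mulmx_sum m (x : 'M[K]_(m, n)) : x = \sum_i x *m R i.
Proof. by rewrite -mulmx_sumr (resolution_sum Rres) mulmx1. Qed.

Lemma resolution_mulmx_eq0 m (x : 'M[K]_(m, n)) :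
  (forall i, x *m R i = 0) -> x = 0.
Proof. by move=> xR; rewrite (resolution_mulmx_sum x) big1. Qed.

Lemma resolution_sub_mulmx m (w : 'M[K]_(m, n)) i j :
  (w <= R i)%MS -> w *m R j = (i == j)%:R *: w.
Proof. by case/submxP => D ->; rewrite -mulmxA (resolution_orth Rres) scalemxAr. Qed.

Lemma mxdirect_resolution : mxdirect (\sum_i R i).
Proof.
apply/mxdirect_sumsP => i _; apply/eqP; rewrite -submx0.
set x := (_ :&: _)%MS.
have -> : x = x *m R i.
  by rewrite (@resolution_sub_mulmx _ _ i) ?capmxSl // eqxx scale1r.
have /sub_sumsmxP [C ->] : (x <= \sum_(j | true && (j != i)) R j)%MS by exact: capmxSr.
rewrite mulmx_suml big1 ?sub0mx // => j /andP [_ ji].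
by rewrite -mulmxA (resolution_orth Rres) (negPf ji) scale0r mulmx0.
Qed.

Lemma rank_resolution i : \rank (R i) = 1%N.
Proof.
have rank_sum : (\sum_j \rank (R j))%N = n.
  move/mxdirectP: mxdirect_resolution => /= <-.
  apply/eqP; rewrite eqn_leq rank_leq_col -{1}(mxrank1 K n) mxrankS //.
  by rewrite -(resolution_sum Rres) summx_sub_sums.
have rank_gt0 j : (0 < \rank (R j))%N by rewrite lt0n mxrank_eq0 resolution_neq0.
have : (\sum_(j | j != i) 1 <= \sum_(j | j != i) \rank (R j))%N by exact: leq_sum.
move: rank_sum; rewrite sum1_card cardC1 card_ord (bigD1 i) //=.
by have := rank_gt0 i; lia.
Qed.

Lemma resolution_mulmx_neq0 p (w : 'rV[K]_n) (X : 'M[K]_(n, p)) i :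
  (w <= R i)%MS -> w != 0 -> R i *m X != 0 -> w *m X != 0.
Proof.
move=> wR w0; have := mxrank_leqif_sup wR.
rewrite rank_resolution rank_rV w0 => -[_ /esym]; rewrite eqxx => /submxP [D ->].
by apply: contraNneq => wX0; rewrite -mulmxA wX0 mulmx0.
Qed.

End Resolution.
End Resolutions.

Lemma mulmx_horner_eigen (K : fieldType) m n (M : 'M[K]_n.+1) (R : 'M[K]_(m, n.+1))
    mu p :
  R *m M = mu *: R -> R *m horner_mx M p = p.[mu] *: R.
Proof.
move=> RM; elim/poly_ind: p => [|p c IHp].
  by rewrite rmorph0 mulmx0 horner0 scale0r.
rewrite rmorphD rmorphM /= horner_mx_X horner_mx_C hornerMXaddC mulmxDr.
by rewrite -mulmxE mulmxA IHp -scalemxAl RM scalerA mul_mx_scalar scalerDl.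
Qed.

Section PrimitiveIdempotents.
Variables (K : fieldType) (d : nat).
Local Notation n := d.+1.
Variables (M : 'M[K]_n) (th : 'I_n -> K).
Hypotheses (th_inj : injective th) (th_eig : forall i, eigenvalue M (th i)).

Definition lagrange_poly i : {poly K} :=
  \prod_(j < n | j != i) ((th i - th j)^-1 *: ('X - (th j)%:P)).

Lemma prim_idemE i : prim_idem M th i = horner_mx M (lagrange_poly i).
Proof.
rewrite /prim_idem /lagrange_poly rmorph_prod; apply: eq_bigr => j _.
by rewrite -[RHS]/(horner_mx M _) horner_mxZ rmorphB /= horner_mx_X horner_mx_C.
Qed.

Lemma lagrange_poly_eval i k : (lagrange_poly i).[th k] = (i == k)%:R.
Proof.
rewrite horner_prod; have [<-|ik] := eqVneq i k.
  rewrite big1 // => j ji; rewrite hornerZ hornerXsubC mulVf //.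
  by rewrite subr_eq0 (inj_eq th_inj) eq_sym.
by rewrite (bigD1 k) 1?eq_sym //= hornerZ hornerXsubC subrr mulr0 mul0r.
Qed.

Lemma lagrange_polyXsubC i : lagrange_poly i * ('X - (th i)%:P) =
  (\prod_(j < n | j != i) (th i - th j)^-1) *: \prod_j ('X - (th j)%:P).
Proof.
by rewrite /lagrange_poly scaler_prod -scalerAl [X in _ = _ *: X](bigD1 i) //= mulrC.
Qed.

Lemma size_lagrange_poly i : (size (lagrange_poly i) <= n)%N.
Proof.
rewrite /lagrange_poly scaler_prod; apply: leq_trans (size_scale_leq _ _) _.
rewrite size_prod => [|j _]; last by rewrite polyXsubC_eq0.
under eq_bigr do rewrite size_XsubC.
by rewrite sum_nat_const cardC1 card_ord; lia.
Qed.

Lemma sum_lagrange_poly : \sum_i lagrange_poly i = 1.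
Proof.
apply/eqP; rewrite -subr_eq0; apply/negP => /negP S0.
set S := _ - 1 in S0.
have S_size : (size S <= n)%N.
  apply: leq_trans (size_polyD _ _) _; rewrite geq_max size_polyN size_poly1.
  rewrite andbT; elim/big_ind: _ => [|p q|j _]; rewrite ?size_poly0 //.
    by move=> sp sq; apply: leq_trans (size_polyD _ _) _; rewrite geq_max sp.
  exact: size_lagrange_poly.
have S_roots : all (root S) (map th (enum 'I_n)).
  apply/allP => _ /mapP [k _ ->]; apply/rootP.
  rewrite hornerD hornerN horner_sum hornerC (bigD1 k) //= lagrange_poly_eval.
  rewrite eqxx big1 ?addr0 ?subrr // => j /negPf.
  by rewrite lagrange_poly_eval => ->.
have := max_poly_roots S0 S_roots.
by rewrite map_inj_uniq ?enum_uniq // size_map size_enum_ord ltnNge S_size => /(_ isT).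
Qed.

Lemma char_poly_eigen : char_poly M = \prod_j ('X - (th j)%:P).
Proof.
set s := map th (enum 'I_n).
have -> : \prod_j ('X - (th j)%:P) = \prod_(z <- s) ('X - z%:P).
  by rewrite big_map big_enum.
have roots : all (root (char_poly M)) s.
  by apply/allP => _ /mapP [j _ ->]; rewrite -eigenvalue_root_char.
have uniq_s : uniq_roots s by rewrite uniq_rootsE map_inj_uniq ?enum_uniq.
apply/esym/eqP; rewrite -eqp_monic ?char_poly_monic ?monic_prod_XsubC //.
rewrite -dvdp_size_eqp ?uniq_roots_dvdp //.
by rewrite size_char_poly size_prod_XsubC size_map size_enum_ord.
Qed.

Lemma prim_idem_mulXsubC i :
  (M - (th i)%:M) *m prim_idem M th i = 0 /\ prim_idem M th i *m (M - (th i)%:M) = 0.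
Proof.
have vanish : horner_mx M (lagrange_poly i * ('X - (th i)%:P)) = 0.
  by rewrite lagrange_polyXsubC horner_mxZ -char_poly_eigen Cayley_Hamilton scaler0.
have XsubCE : horner_mx M ('X - (th i)%:P) = M - (th i)%:M.
  by rewrite rmorphB /= horner_mx_X horner_mx_C.
rewrite prim_idemE -XsubCE !mulmxE -!rmorphM /=; split; last exact: vanish.
by rewrite mulrC.
Qed.

Lemma prim_idem_resolution : eigen_resolution M th (prim_idem M th).
Proof.
have left_eig i : M *m prim_idem M th i = th i *: prim_idem M th i.
  apply/eqP; rewrite -subr_eq0 -mul_scalar_mx -mulmxBl.
  by have [-> _] := prim_idem_mulXsubC i.
have right_eig i : prim_idem M th i *m M = th i *: prim_idem M th i.
  apply/eqP; rewrite -subr_eq0 -mul_mx_scalar -mulmxBr.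
  by have [_ ->] := prim_idem_mulXsubC i.
split=> //; split=> [|i j|i].
- under eq_bigr do rewrite prim_idemE.
  by rewrite -rmorph_sum sum_lagrange_poly rmorph1.
- rewrite [prim_idem M th j]prim_idemE (mulmx_horner_eigen _ (right_eig i)).
  by rewrite lagrange_poly_eval eq_sym.
- have /eigenvalueP [v vM v0] := th_eig i.
  apply: contraNneq v0 => E0; have := mulmx_horner_eigen (lagrange_poly i) vM.
  by rewrite -prim_idemE E0 mulmx0 lagrange_poly_eval eqxx scale1r => <-.
Qed.

End PrimitiveIdempotents.

Section Families.
Variables (K : fieldType) (d : nat).
Local Notation n := d.+1.
Implicit Types (u : 'I_n -> 'rV[K]_n) (R : 'I_n -> 'M[K]_n) (M : 'M[K]_n).

Definition spanning u :=
  forall v : 'rV[K]_n, exists c : 'I_n -> K, v = \sum_k c k *: u k.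

Lemma spanning_rev u : spanning u -> spanning (reversed u).
Proof.
move=> u_span v; have [c ->] := u_span v; exists (reversed c).
by rewrite [LHS](reindex_inj rev_ord_inj).
Qed.

Lemma spanning_mulmx_eq0 p u (X : 'M[K]_(n, p)) :
  spanning u -> (forall l, u l *m X = 0) -> X = 0.
Proof.
move=> u_span uX; apply/row_matrixP => r; rewrite row0 -[X]mul1mx row_mul.
have [c ->] := u_span (row r 1%:M).
by rewrite mulmx_suml big1 // => k _; rewrite -scalemxAl uX scaler0.
Qed.

Lemma free_spanning u :
  (forall c : 'I_n -> K, \sum_k c k *: u k = 0 -> forall k, c k = 0) ->
  spanning u.
Proof.
move=> u_free v; set C := \matrix_k u k.
have kerC : kermx C = 0.
  apply/row_matrixP => r; rewrite row0.
  have : row r (kermx C) *m C = 0 by rewrite -row_mul mulmx_ker row0.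
  rewrite mulmx_sum_row; under eq_bigr do rewrite rowK.
  by move/u_free => c0; apply/rowP => j; rewrite [RHS]mxE c0.
have C_unit : C \in unitmx by rewrite -row_free_unit -kermx_eq0 kerC.
exists (fun k => (v *m invmx C) 0 k).
by rewrite -{1}(mulmxKV C_unit v) mulmx_sum_row; under eq_bigr do rewrite rowK.
Qed.

Definition lower_triangular u R :=
  (forall l k : 'I_n, (l < k)%N -> u l *m R k = 0) /\ (forall k, u k *m R k != 0).

Definition upper_triangular u R :=
  (forall l k : 'I_n, (k < l)%N -> u l *m R k = 0) /\ (forall k, u k *m R k != 0).

Lemma lower_triangular_rev u R :
  lower_triangular (reversed u) (reversed R) <-> upper_triangular u R.
Proof.
rewrite /reversed; split=> -[tri diag]; split=> [l k kl|k].
- by have := tri (rev_ord l) (rev_ord k); rewrite !rev_ordK ltn_rev_ord; apply.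
- by have := diag (rev_ord k); rewrite rev_ordK.
- by apply: tri; rewrite ltn_rev_ord.
- exact: diag.
Qed.

Lemma upper_triangular_rev u R :
  upper_triangular (reversed u) (reversed R) <-> lower_triangular u R.
Proof.
rewrite /reversed; split=> -[tri diag]; split=> [l k kl|k].
- by have := tri (rev_ord l) (rev_ord k); rewrite !rev_ordK ltn_rev_ord; apply.
- by have := diag (rev_ord k); rewrite rev_ordK.
- by apply: tri; rewrite ltn_rev_ord.
- exact: diag.
Qed.

Lemma lower_triangular_coef_eq0 u R (c : 'I_n -> K) (j : nat) :
  lower_triangular u R ->
  (forall k : 'I_n, (j <= k)%N -> (\sum_l c l *: u l) *m R k = 0) ->
  forall k : 'I_n, (j <= k)%N -> c k = 0.
Proof.
move=> [tri diag] xR.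
suff: forall m (k : 'I_n), (n - k <= m)%N -> (j <= k)%N -> c k = 0.
  by move=> ck k; apply: ck (leqnn _).
elim=> [k|m IHm k km jk]; first by have := ltn_ord k; lia.
have := xR k jk; rewrite mulmx_suml (bigD1 k) //= big1 => [|l lk].
  rewrite addr0 -scalemxAl => /eqP.
  by rewrite scalemx_eq0 (negPf (diag k)) orbF => /eqP.
rewrite -scalemxAl; case: (ltngtP l k) => [lk'|kl|/val_inj lk'].
- by rewrite tri ?scaler0.
- by rewrite IHm ?scale0r //; lia.
- by rewrite lk' eqxx in lk.
Qed.

Lemma lower_triangular_spanning u R : lower_triangular u R -> spanning u.
Proof.
move=> u_tri; apply: free_spanning => c c0 k.
by apply: (lower_triangular_coef_eq0 (j := 0) u_tri) => // l _; rewrite c0 mul0mx.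
Qed.

Lemma lower_upper_triangular_line u P Q x (j : 'I_n) :
  spanning u -> lower_triangular u Q -> upper_triangular u P ->
  (forall k : 'I_n, (j < k)%N -> x *m Q k = 0) ->
  (forall k : 'I_n, (k < j)%N -> x *m P k = 0) -> x *m P j != 0 ->
  exists2 a, a != 0 & x = a *: u j.
Proof.
move=> u_span Qtri Ptri xQ xP xPj; have [c xE] := u_span x.
have c_gt : forall k : 'I_n, (j < k)%N -> c k = 0.
  by apply: (lower_triangular_coef_eq0 Qtri) => k; rewrite -xE; exact: xQ.
have c_lt : forall k : 'I_n, (k < j)%N -> c k = 0.
  have xE' : x = \sum_l reversed c l *: reversed u l.
    by rewrite xE [LHS](reindex_inj rev_ord_inj).
  move=> k kj; rewrite -[k]rev_ordK.
  apply: (lower_triangular_coef_eq0 (c := reversed c) (j := (rev_ord j).+1)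
           (proj2 (lower_triangular_rev _ _) Ptri)) => [l jl|].
    by rewrite -xE' xP // -[j]rev_ordK ltn_rev_ord.
  by rewrite ltn_rev_ord.
have xj : x = c j *: u j.
  rewrite xE (bigD1 j) //= big1 ?addr0 // => l lj.
  case: (ltngtP l j) => [/c_lt ->|/c_gt ->|/val_inj lj']; rewrite ?scale0r //.
  by rewrite lj' eqxx in lj.
exists (c j) => //; apply: contraNneq xPj => cj0.
by rewrite xj cj0 scale0r mul0mx.
Qed.

End Families.

Section Tridiagonal.
Variables (K : fieldType) (d : nat).
Local Notation n := d.+1.
Implicit Types (u : 'I_n -> 'rV[K]_n) (R : 'I_n -> 'M[K]_n) (M : 'M[K]_n).

Definition raises_by_one R M :=
  forall i j : 'I_n, ((j.+1 < i)%N -> R j *m M *m R i = 0) /\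
                     (i == j.+1 :> nat -> R j *m M *m R i != 0).

Definition raising M (lam : 'I_n -> K) u :=
  forall i : 'I_n, (i < d)%N ->
    exists2 a, a != 0 & u i *m (M - (lam i)%:M) = a *: u (inord i.+1).

Definition lowering M (lam : 'I_n -> K) u :=
  forall i : 'I_n, (0 < i)%N ->
    exists2 b, b != 0 & u i *m (M - (lam i)%:M) = b *: u (inord i.-1).

Lemma lowering_rev M lam u :
  lowering M lam u -> raising M (reversed lam) (reversed u).
Proof.
move=> u_low i id; have [|b b0 ub] := u_low (rev_ord i); first by rewrite /=; lia.
exists b => //; rewrite /reversed ub; congr (_ *: u _); apply: val_inj.
by rewrite /= !inordK /=; lia.
Qed.

Lemma mulmx_resolution_tridiag m R M (x : 'M[K]_(m, n)) (j i : 'I_n) :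
  resolution R -> (forall i j : 'I_n, (j.+1 < i)%N -> R j *m M *m R i = 0) ->
  (forall k : 'I_n, (j < k)%N -> x *m R k = 0) -> (j < i)%N ->
  x *m M *m R i = x *m R j *m M *m R i.
Proof.
move=> Rres RMR0 xR ji; rewrite {1}(resolution_mulmx_sum Rres x) !mulmx_suml.
rewrite (bigD1 j) //= big1 ?addr0 // => k kj.
case: (ltngtP j k) => [/xR ->|kj'|/val_inj jk]; first by rewrite !mul0mx.
  by rewrite -!mulmxA (mulmxA (R k)) RMR0 ?mulmx0 //; lia.
by rewrite jk eqxx in kj.
Qed.

Lemma raises_by_one_step R M (x : 'rV[K]_n) (j : 'I_n) :
  resolution R -> raises_by_one R M ->
  (forall k : 'I_n, (j < k)%N -> x *m R k = 0) -> x *m R j != 0 ->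
  forall i : 'I_n, ((j.+1 < i)%N -> x *m M *m R i = 0) /\
                   (i == j.+1 :> nat -> x *m M *m R i != 0).
Proof.
move=> Rres RM xR xRj i; have RMR0 i' j' := proj1 (RM i' j').
have xMR := mulmx_resolution_tridiag Rres RMR0 xR.
split=> [ji|/eqP ij]; rewrite xMR; try lia.
  by rewrite -!mulmxA (mulmxA (R j)) RMR0 ?mulmx0.
rewrite -mulmxA; apply: (resolution_mulmx_neq0 Rres (submxMl _ _) xRj).
by rewrite mulmxA; apply: (proj2 (RM i j)); rewrite ij.
Qed.

Lemma raising_upper_triangular M lam R u :
  eigen_resolution M lam R -> spanning u -> raising M lam u -> upper_triangular u R.
Proof.
move=> Rres u_span u_raise.
(* c k is prod_(m < l) (lam k - lam m) / a_m, which vanishes iff k < l. *)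
have chain l : (l <= d)%N -> exists c : 'I_n -> K,
    (forall k, u (inord l) *m R k = c k *: (u ord0 *m R k)) /\
    (forall k, (c k == 0) = (k < l)%N).
  elim: l => [_|l IHl ld].
    exists (fun _ => 1); split=> k; last by rewrite oner_eq0.
    by rewrite scale1r; congr (u _ *m _); apply: val_inj; rewrite /= inordK.
  have [c [uR c0]] := IHl (ltnW ld).
  have ln : (l < n)%N by lia.
  have [|a a0 ua] := u_raise (inord l); first by rewrite inordK.
  exists (fun k => a^-1 * (lam k - lam (inord l)) * c k); split=> k.
    have -> : u (inord l.+1) = a^-1 *: (u (inord l) *m (M - (lam (inord l))%:M)).
      by rewrite ua scalerA mulVf // scale1r inordK.
    rewrite -scalemxAl -mulmxA (eigen_resolution_subC _ _ Rres) -scalemxAr uR.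
    by rewrite !scalerA.
  rewrite !mulf_eq0 invr_eq0 (negPf a0) c0 subr_eq0.
  rewrite (inj_eq (eigen_resolution_inj Rres)) -val_eqE /= inordK //; lia.
have u0R k : u ord0 *m R k != 0.
  apply: contraNneq (resolution_neq0 (eigen_resolution_res Rres) k) => u0R0.
  apply/eqP/(spanning_mulmx_eq0 u_span) => l.
  have [|c [uR _]] := chain l; first by rewrite -ltnS.
  by rewrite -[l]inord_val uR u0R0 scaler0.
split=> [l k kl|l]; have [|c [uR c0]] := chain l; try by rewrite -ltnS.
all: rewrite inord_val in uR.
  by apply/eqP; rewrite uR scalemx_eq0 c0 kl.
by rewrite uR scalemx_eq0 c0 ltnn u0R.
Qed.

Lemma lower_triangular_raises_by_one M lam R u :
  resolution R -> spanning u -> lower_triangular u R -> raising M lam u ->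
  raises_by_one R M.
Proof.
move=> Rres u_span [tri diag] u_raise.
have uM (l : 'I_n) : (l < d)%N -> exists2 a, a != 0 &
    u l *m M = a *: u (inord l.+1) + lam l *: u l.
  move=> ld; have [a a0 ua] := u_raise l ld; exists a => //.
  by rewrite -ua mulmxBr mul_mx_scalar subrK.
have uMR0 (l i : 'I_n) : (l.+1 < i)%N -> u l *m M *m R i = 0.
  move=> li; have ln : (l.+1 < n)%N by have := ltn_ord i; lia.
  have [|a _ ->] := uM l; first by lia.
  by rewrite mulmxDl -!scalemxAl !tri ?scaler0 ?addr0 ?inordK //; lia.
have RMR0 (i j : 'I_n) : (j.+1 < i)%N -> R j *m M *m R i = 0.
  move=> ji; apply/row_matrixP => r; rewrite row0 !row_mul.
  have [c vc] := u_span (row r (R j)).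
  have c0 : forall k : 'I_n, (j.+1 <= k)%N -> c k = 0.
    apply: (lower_triangular_coef_eq0 (conj tri diag)) => k jk.
    by rewrite -vc -row_mul (resolution_orth Rres) -val_eqE /= ltn_eqF // scale0r row0.
  rewrite vc !mulmx_suml big1 // => l _; rewrite -!scalemxAl.
  case: (leqP l j) => lj; last by rewrite c0 ?scale0r.
  by rewrite uMR0 ?scaler0 //; lia.
move=> i j; split=> [|/eqP ij]; first exact: RMR0.
have jd : (j < d)%N by have := ltn_ord i; lia.
have [a a0 ujM] := uM j jd.
have ujMRi : u j *m M *m R i = a *: (u i *m R i).
  rewrite ujM mulmxDl -!scalemxAl (tri j i) ?scaler0 ?addr0; last by lia.
  by congr (_ *: (u _ *m _)); apply: val_inj; rewrite /= inordK -?ij.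
have ujMRi_neq0 : u j *m M *m R i != 0.
  by rewrite ujMRi scalemx_eq0 negb_or a0 diag.
apply: contraNneq ujMRi_neq0 => RMR.
rewrite (mulmx_resolution_tridiag Rres RMR0 (tri j)); last by lia.
by rewrite -!mulmxA (mulmxA (R j)) RMR mulmx0.
Qed.

Definition raise_seq M (lam : 'I_n -> K) (x : 'rV[K]_n) (i : 'I_n) : 'rV[K]_n :=
  x *m \prod_(m < i) (M - (lam (inord m))%:M).

Lemma raise_seq_raising M lam x : raising M lam (raise_seq M lam x).
Proof.
move=> i id; exists 1; rewrite ?oner_eq0 // scale1r /raise_seq inordK ?ltnS //.
by rewrite big_ord_recr /= -mulmxE mulmxA inord_val.
Qed.

Lemma raises_by_one_lower_triangular M lam R x :
  resolution R -> raises_by_one R M -> (x <= R ord0)%MS -> x != 0 ->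
  lower_triangular (raise_seq M lam x) R.
Proof.
move=> Rres RM xR0 x0; pose w k := x *m \prod_(m < k) (M - (lam (inord m))%:M).
suff wR k : (k <= d)%N ->
    (forall j : 'I_n, (k < j)%N -> w k *m R j = 0) /\ w k *m R (inord k) != 0.
  split=> [l k|k]; first by apply: (proj1 (wR l _)); rewrite -ltnS.
  by have [|_] := wR k; rewrite ?inord_val // -ltnS.
elim: k => [_|k IHk kd].
  rewrite /w big_ord0 mulmx1.
  split=> [j j0|]; rewrite (resolution_sub_mulmx Rres _ xR0).
    by rewrite -val_eqE /= ltn_eqF // scale0r.
  by rewrite (_ : ord0 == inord 0) ?scale1r // -val_eqE /= inordK.
have [wR0 wRk] := IHk (ltnW kd).
have wR0' (j : 'I_n) : ((inord k : 'I_n) < j)%N -> w k *m R j = 0.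
  by rewrite inordK; [exact: wR0 | lia].
have step := raises_by_one_step Rres RM wR0' wRk.
have wSR (j : 'I_n) : w k.+1 *m R j = w k *m M *m R j - lam (inord k) *: (w k *m R j).
  by rewrite /w big_ord_recr /= -mulmxE mulmxA mulmxBr mulmxBl mul_mx_scalar -scalemxAl.
split=> [j kj|]; rewrite wSR wR0 ?scaler0 ?subr0 ?inordK //; try lia.
  by apply: (proj1 (step j)); rewrite inordK //; lia.
by apply: (proj2 (step _)); rewrite !inordK //; lia.
Qed.

Lemma upper_triangular_top M lam R u :
  eigen_resolution M lam R -> upper_triangular u R ->
  u ord_max *m (M - (lam ord_max)%:M) = 0.
Proof.
move=> Rres [tri _]; apply: (resolution_mulmx_eq0 (eigen_resolution_res Rres)) => k.
rewrite -mulmxA (eigen_resolution_subC _ _ Rres) -scalemxAr.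
case: (ltnP k d) => [kd|dk]; first by rewrite (tri ord_max) ?scaler0.
have -> : k = ord_max by apply/val_inj/eqP; rewrite eqn_leq dk -ltnS ltn_ord.
by rewrite subrr scale0r.
Qed.

End Tridiagonal.

Section SplitBases.
Variables (K : fieldType) (d : nat).
Local Notation n := d.+1.
Variables (B Bs : 'M[K]_n) (th ths : 'I_n -> K) (P Q : 'I_n -> 'M[K]_n).
Hypotheses (Pres : eigen_resolution B th P) (Qres : eigen_resolution Bs ths Q).

Definition split_basis (u : 'I_n -> 'rV[K]_n) :=
  [/\ spanning u, forall i, u i != 0, raising B th u, lowering Bs ths u &
      u ord_max *m (B - (th ord_max)%:M) = 0 /\ u ord0 *m (Bs - (ths ord0)%:M) = 0].

Lemma split_basis_raises_by_one u :
  split_basis u -> raises_by_one Q B /\ raises_by_one (reversed P) Bs.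
Proof.
case=> u_span _ u_raise u_low _.
have u_rev_raise := lowering_rev u_low.
have Qtri : lower_triangular u Q.
  apply/upper_triangular_rev/(raising_upper_triangular (eigen_resolution_rev Qres)).
    exact: spanning_rev.
  exact: u_rev_raise.
have Ptri : lower_triangular (reversed u) (reversed P).
  exact/lower_triangular_rev/(raising_upper_triangular Pres u_span u_raise).
split; first exact: lower_triangular_raises_by_one
  (eigen_resolution_res Qres) u_span Qtri u_raise.
apply: (lower_triangular_raises_by_one (resolution_rev (eigen_resolution_res Pres))).
- exact: spanning_rev.
- exact: Ptri.
- exact: u_rev_raise.
Qed.

Lemma triangular_lowering u :
  raises_by_one (reversed P) Bs -> spanning u ->
  lower_triangular u Q -> upper_triangular u P ->
  lowering Bs ths u /\ u ord0 *m (Bs - (ths ord0)%:M) = 0.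
Proof.
move=> PBs u_span Qtri Ptri; have Pr := eigen_resolution_res Pres.
have uBsQ (i k : 'I_n) : (i <= k)%N -> u i *m (Bs - (ths i)%:M) *m Q k = 0.
  rewrite -mulmxA (eigen_resolution_subC _ _ Qres) -scalemxAr.
  case: (ltngtP i k) => [ik _|//|/val_inj <-]; last by rewrite subrr scale0r.
  by rewrite (proj1 Qtri) ?scaler0.
split=> [i i0|]; last first.
  by apply: (resolution_mulmx_eq0 (eigen_resolution_res Qres)) => k; exact: uBsQ.
set x := u i *m (Bs - (ths i)%:M); set i' : 'I_n := inord i.-1.
have i'E : i' = i.-1 :> nat by rewrite inordK //; have := ltn_ord i; lia.
have xPE (k : 'I_n) : (k < i)%N -> x *m P k = u i *m Bs *m P k.
  move=> ki; rewrite /x mulmxBr mulmxBl mul_mx_scalar -scalemxAl.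
  by rewrite (proj1 Ptri) // scaler0 subr0.
have uP (k : 'I_n) : (rev_ord i < k)%N -> u i *m reversed P k = 0.
  by move=> ik; apply: (proj1 Ptri); rewrite -[i]rev_ordK ltn_rev_ord.
have uPi : u i *m reversed P (rev_ord i) != 0.
  by rewrite /reversed rev_ordK; exact: (proj2 Ptri).
have step := raises_by_one_step (resolution_rev Pr) PBs uP uPi.
have xP (k : 'I_n) : (k < i')%N -> x *m P k = 0.
  move=> ki; rewrite xPE; last by lia.
  have [+ _] := step (rev_ord k); rewrite /reversed rev_ordK; apply.
  by rewrite /=; have := ltn_ord i; lia.
have xPi' : x *m P i' != 0.
  rewrite xPE; last by lia.
  have [_ +] := step (rev_ord i'); rewrite /reversed rev_ordK; apply.
  by rewrite /= i'E; have := ltn_ord i; lia.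
have [|b b0 xb] := lower_upper_triangular_line u_span Qtri Ptri (j := i') _ xP xPi'.
  by move=> k ik; apply: uBsQ; lia.
by exists b.
Qed.

Lemma split_basis_of_raises_by_one :
  raises_by_one Q B -> raises_by_one (reversed P) Bs -> exists u, split_basis u.
Proof.
move=> QB PBs; have Qr := eigen_resolution_res Qres.
set u := raise_seq B th (nz_row (Q ord0)).
have Qtri : lower_triangular u Q.
  apply: (raises_by_one_lower_triangular th Qr QB (nz_row_sub _)).
  by rewrite nz_row_eq0 (resolution_neq0 Qr).
have u_span := lower_triangular_spanning Qtri.
have u_raise : raising B th u := raise_seq_raising B th _.
have Ptri := raising_upper_triangular Pres u_span u_raise.
have [u_low u0] := triangular_lowering PBs u_span Qtri Ptri.
exists u; split=> //; last by split=> //; exact: upper_triangular_top Pres Ptri.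
by move=> i; apply: contraNneq (proj2 Qtri i) => ->; rewrite mul0mx.
Qed.

Lemma exists_split_basis :
  (exists u, split_basis u) <-> raises_by_one Q B /\ raises_by_one (reversed P) Bs.
Proof.
split=> [[u /split_basis_raises_by_one //]|[QB PBs]].
exact: split_basis_of_raises_by_one.
Qed.

End SplitBases.

Section Decompositions.
Variables (K : fieldType) (d : nat).
Local Notation n := d.+1.
Implicit Types (x y : 'rV[K]_n) (M : 'M[K]_n).

Lemma act_subC M (U : 'M[K]_n) c : act (M - c%:M) U = U *m (M^T - c%:M).
Proof. by rewrite /act linearB /= tr_scalar_mx. Qed.

Lemma genmx_mulmx_eq x y M c :
  c != 0 -> x *m M = c *: y -> (<<x>> *m M == <<y>>)%MS.
Proof.
move=> c0 xM; apply/andP; rewrite !(eqmxMr _ (genmxE _)) !genmxE xM.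
by rewrite !(eqmx_scale _ c0) submx_refl.
Qed.

Lemma genmx_mulmx_eq0 x M : x *m M = 0 -> (<<x>> *m M == (0 : 'M[K]_n))%MS.
Proof. by move=> xM; apply/andP; rewrite !(eqmxMr _ (genmxE _)) xM !sub0mx. Qed.

Lemma eqmx_rV_scale x y : (x == y)%MS -> y != 0 -> exists2 a, a != 0 & x = a *: y.
Proof.
case/andP => /submxP [D ->] yx y0; exists (D 0 0); last first.
  by rewrite {1}(mx11_scalar D) mul_scalar_mx.
apply: contraNneq y0 => D0.
by move: yx; rewrite (mx11_scalar D) D0 mul_scalar_mx scale0r => /submx0null ->.
Qed.

Lemma decomposition_genmx (u : 'I_n -> 'rV[K]_n) :
  spanning u -> (forall i, u i != 0) -> is_decomposition (fun i => <<u i>>%MS).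
Proof.
move=> u_span u0; have rank_u i : \rank <<u i>> = 1%N by rewrite genmxE rank_rV u0.
have sum_u : (\sum_i <<u i>> == 1%:M)%MS.
  rewrite submx1 /=; apply/row_subP => r; have [c ->] := u_span (row r 1%:M).
  by apply: summx_sub_sums => i _; rewrite genmxE scalemx_sub.
split=> //; split=> //; rewrite mxdirectE /= (eqmx_rank sum_u) mxrank1.
by under eq_bigr do rewrite rank_u; rewrite sum1_card card_ord.
Qed.

Variables (A As : 'M[K]_n) (th ths : 'I_n -> K).

Lemma split_genmx (u : 'I_n -> 'rV[K]_n) :
  split_basis A^T As^T th ths u -> is_split A As th ths (fun i => <<u i>>%MS).
Proof.
case=> _ _ u_raise u_low [u_max u_0].
split; [|split; [|split]]; try move=> i i_bound; rewrite act_subC.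
- by have [a a0 ua] := u_raise i i_bound; apply: genmx_mulmx_eq a0 ua.
- exact: genmx_mulmx_eq0.
- by have [b b0 ub] := u_low i i_bound; apply: genmx_mulmx_eq b0 ub.
- exact: genmx_mulmx_eq0.
Qed.

Lemma split_basis_of_decomposition (U : 'I_n -> 'M[K]_n) :
  is_decomposition U -> is_split A As th ths U ->
  exists u, split_basis A^T As^T th ths u.
Proof.
case=> U_rank [_ U_sum] [U_raise [U_max [U_low U_0]]].
have /fin_all_exists [u Uu] i : exists u : 'rV[K]_n, (U i :=: u)%MS /\ u != 0.
  have U0 : U i != 0 by rewrite -mxrank_eq0 U_rank.
  exists (nz_row (U i)); rewrite nz_row_eq0 U0; split=> //; apply/eqmxP.
  rewrite andbC nz_row_sub; have := mxrank_leqif_sup (nz_row_sub (U i)).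
  by rewrite U_rank rank_rV nz_row_eq0 U0 => -[_ /esym ->].
have Ueq i := proj1 (Uu i); have u0 i := proj2 (Uu i).
have u_span : spanning u.
  move=> v; have : (v <= \sum_i <<u i>>)%MS.
    have U_gen i : (U i :=: <<u i>>)%MS := eqmx_trans (Ueq i) (eqmx_sym (genmxE _)).
    rewrite (submx_trans (submx1 v)) // -(eqmx_sums (fun i _ => U_gen i)).
    by case/andP: U_sum.
  case/sub_sums_genmxP => c ->; exists (fun k => c k 0 0).
  by apply: eq_bigr => k _; rewrite {1}(mx11_scalar (c k)) mul_scalar_mx.
exists u; split=> // [i id|i i0|].
- have := U_raise i id; rewrite act_subC !(eqmxMr _ (Ueq i)) !(Ueq (inord _)).
  by move/eqmx_rV_scale; apply.
- have := U_low i i0; rewrite act_subC !(eqmxMr _ (Ueq i)) !(Ueq (inord _)).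
  by move/eqmx_rV_scale; apply.
- move: U_max U_0; rewrite !act_subC !(eqmxMr _ (Ueq _)).
  by move=> /andP [/submx0null -> _] /andP [/submx0null -> _].
Qed.

Lemma exists_split_decomposition :
  (exists U, is_decomposition U /\ is_split A As th ths U) <->
  exists u, split_basis A^T As^T th ths u.
Proof.
split=> [[U [/split_basis_of_decomposition U_split /U_split //]]|[u u_split]].
exists (fun i => <<u i>>%MS); split; last exact: split_genmx.
by case: u_split => u_span u0 _ _ _; exact: decomposition_genmx.
Qed.

End Decompositions.

Section Transpose.
Variables (K : fieldType) (d : nat).
Local Notation n := d.+1.
Variables (E : 'I_n -> 'M[K]_n) (A : 'M[K]_n).

Lemma trmx_mul3_eq0 (i j : 'I_n) :
  ((E j)^T *m A^T *m (E i)^T == 0) = (E i *m A *m E j == 0).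
Proof. by rewrite -trmx_mul -trmx_mul mulmxA trmx_eq0. Qed.

Lemma trmx_mul3_eq0P (i j : 'I_n) :
  (E j)^T *m A^T *m (E i)^T = 0 <-> E i *m A *m E j = 0.
Proof. by split=> /eqP; [rewrite trmx_mul3_eq0 | rewrite -trmx_mul3_eq0] => /eqP. Qed.

Lemma raises_by_one_trmx :
  raises_by_one (fun i => (E i)^T) A^T <->
  forall i j : 'I_n, ((j.+1 < i)%N -> E i *m A *m E j = 0) /\
                     (i == j.+1 :> nat -> E i *m A *m E j != 0).
Proof.
by split=> EA i j; have [EA0 EA1] := EA i j;
  split=> [/EA0/trmx_mul3_eq0P|/EA1]; rewrite ?trmx_mul3_eq0.
Qed.

Lemma raises_by_one_rev_trmx :
  raises_by_one (reversed (fun i => (E i)^T)) A^T <->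
  forall i j : 'I_n, ((i.+1 < j)%N -> E i *m A *m E j = 0) /\
                     (j == i.+1 :> nat -> E i *m A *m E j != 0).
Proof.
have rev_succ (i j : 'I_n) : (rev_ord i == (rev_ord j).+1 :> nat) = (j == i.+1 :> nat).
  by apply/eqP/eqP => /=; have := ltn_ord i; have := ltn_ord j; lia.
rewrite /reversed; split=> EA i j.
  have [EA0 EA1] := EA (rev_ord i) (rev_ord j); rewrite !rev_ordK in EA0 EA1.
  split=> [ij|ji]; first by apply/trmx_mul3_eq0P/EA0 => /=; have := ltn_ord j; lia.
  by rewrite -trmx_mul3_eq0; apply: EA1; rewrite rev_succ.
have [EA0 EA1] := EA (rev_ord i) (rev_ord j).
split=> [ji|ij]; first by apply/trmx_mul3_eq0P/EA0 => /=; have := ltn_ord i; lia.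
by rewrite trmx_mul3_eq0; apply: EA1; rewrite -rev_succ !rev_ordK.
Qed.

End Transpose.

Theorem theorem4p1 (K : fieldType) (d : nat) (A As : 'M[K]_(d.+1))
  (th ths : 'I_(d.+1) -> K) :
  mult_free_ordering A th -> mult_free_ordering As ths ->
  (exists U : 'I_(d.+1) -> 'M[K]_(d.+1),
     is_decomposition U /\ is_split A As th ths U) <->
  ((forall i j : 'I_(d.+1),
      ((j.+1 < i)%N -> prim_idem As ths i *m A *m prim_idem As ths j = 0) /\
      (i == j.+1 :> nat -> prim_idem As ths i *m A *m prim_idem As ths j != 0)) /\
   (forall i j : 'I_(d.+1),
      ((i.+1 < j)%N -> prim_idem A th i *m As *m prim_idem A th j = 0) /\
      (j == i.+1 :> nat -> prim_idem A th i *m As *m prim_idem A th j != 0))).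
Proof.
move=> [th_inj th_eig] [ths_inj ths_eig].
rewrite exists_split_decomposition (exists_split_basis
  (eigen_resolution_tr (prim_idem_resolution th_inj th_eig))
  (eigen_resolution_tr (prim_idem_resolution ths_inj ths_eig))).
by rewrite raises_by_one_trmx raises_by_one_rev_trmx.
Qed.
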